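(* Let $p$ and $q$ be distinct primes, $n=pq$, and let $e$ be a positive integer with $\gcd(e,\varphi(n))=1$. For a positive integer $k$, let $E_{n,e,k}$ be the set of residues $m\in\mathbb{Z}_n$ such that $k$ is the smallest positive integer with $m^{e^{k}}\equiv m \pmod n$ (the fixed points of order $k$ of the map $x\mapsto x^{e}\bmod n$). Then $$|E_{n,e,k}|=\sum_{d\mid k}\mu(k/d)\,\bigl(\gcd(e^{d}-1,p-1)+1\bigr)\bigl(\gcd(e^{d}-1,q-1)+1\bigr),$$ where the sum runs over the positive divisors $d$ of $k$ and $\mu$ is the Möbius function.
   Context: $\mathbb{Z}_n$ denotes a complete residue system modulo $n$, $\varphi$ is Euler's totient function, and $\gcd(a,b)$ is the greatest common divisor (with $\gcd(0,b)=b$). *)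

From mathcomp Require Import all_boot all_order all_algebra.
Import GRing.Theory.
Set Implicit Arguments. Unset Strict Implicit. Unset Printing Implicit Defensive.

(* Moebius function: mu(n) = (-1)^r if n > 0 is a product of r distinct
   primes, 0 if n > 0 has a squared prime factor; mu(0) = 0 (never used). *)
Definition moebius (n : nat) : int :=
  if (0 < n)%N && all (fun p => logn p n == 1)%N (primes n)
  then ((-1) ^+ size (primes n))%R else 0%R.

Definition fixed_of_order (n e k m : nat) : bool :=
  [&& (0 < k)%N, (m ^ (e ^ k) == m %[mod n])
   & [forall j : 'I_k, (0 < j)%N ==> (m ^ (e ^ j) != m %[mod n])]].

Definition E_set (n e k : nat) : {set 'I_n} :=
  [set m : 'I_n | fixed_of_order n e k m].

From mathcomp Require Import all_boot all_algebra finfield cyclic.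
Import GRing.Theory.
Set Implicit Arguments. Unset Strict Implicit. Unset Printing Implicit Defensive.

(* Let F(d) count the residues m with m^(e^d) = m (mod n).  Each such m is a
   fixed point of a unique order c, and c divides d, so F(d) is the sum of
   |E_{n,e,c}| over the divisors c of d; Moebius inversion then expresses
   |E_{n,e,k}| through the F(d).  By the Chinese remainder theorem F(d) is the
   product of the number of solutions of x^N = x with N = e^d in F_p and in
   F_q, and in F_p these are 0 together with the (N-1)-th roots of unity of
   the cyclic group F_p^*, which number gcd(N-1, p-1). *)

Section DivisorSums.

Lemma divisors_gt0 d k : (0 < k)%N -> d \in divisors k -> (0 < d)%N.
Proof. by move=> k_gt0; rewrite -dvdn_divisors // => /dvdn_gt0; apply. Qed.

Lemma perm_divisors_dvd c k : (0 < k)%N -> c %| k ->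
  perm_eq [seq d <- divisors k | c %| d] (map (muln c) (divisors (k %/ c))).
Proof.
move=> k_gt0 ck; have c_gt0 := dvdn_gt0 k_gt0 ck.
have kc_gt0 : (0 < k %/ c)%N by rewrite divn_gt0 // dvdn_leq.
apply: uniq_perm; first by rewrite filter_uniq // divisors_uniq.
  by rewrite map_inj_uniq ?divisors_uniq //; move=> a b /eqP; rewrite eqn_pmul2l // => /eqP.
move=> x; rewrite mem_filter -dvdn_divisors //; apply/andP/mapP.
  move=> [cx xk]; exists (x %/ c); last by rewrite mulnC divnK.
  by rewrite -dvdn_divisors // dvdn_divRL // divnK.
move=> [y]; rewrite -dvdn_divisors // => yk ->.
by rewrite dvdn_mulr // mulnC -dvdn_divRL.
Qed.

Lemma perm_divisors_sub d k : (0 < k)%N -> d %| k ->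
  perm_eq (divisors d) [seq c <- divisors k | c %| d].
Proof.
move=> k_gt0 dk; have d_gt0 := dvdn_gt0 k_gt0 dk.
apply: uniq_perm; rewrite ?filter_uniq ?divisors_uniq // => c.
rewrite mem_filter -!dvdn_divisors //.
by apply/idP/andP => [cd | [] //]; split; last exact: dvdn_trans dk.
Qed.

Lemma perm_divisors_compl k : (0 < k)%N ->
  perm_eq (divisors k) (map (fun d => k %/ d) (divisors k)).
Proof.
move=> k_gt0; have divnK_compl d : d %| k -> k %/ (k %/ d) = d.
  by move=> dk; rewrite divnA // mulKn // (dvdn_gt0 k_gt0 dk).
apply: uniq_perm; rewrite ?divisors_uniq //.
  rewrite map_inj_in_uniq ?divisors_uniq // => a b.
  rewrite -!dvdn_divisors // => ak bk E.
  by rewrite -(divnK_compl a ak) E divnK_compl.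
move=> x; rewrite -dvdn_divisors //; apply/idP/mapP => [xk | [y]].
  by exists (k %/ x); rewrite ?divnK_compl // -dvdn_divisors // dvdn_div.
by rewrite -dvdn_divisors // => yk ->; apply: dvdn_div.
Qed.

End DivisorSums.

Section Moebius.

Local Open Scope ring_scope.

Lemma moebiusM_prime p d : prime p -> (0 < d)%N -> ~~ (p %| d)%N ->
  moebius (p * d) = - moebius d.
Proof.
move=> p_pr d_gt0 pNd; have p_gt0 := prime_gt0 p_pr.
have primes_pd : perm_eq (primes (p * d)) (p :: primes d).
  apply: uniq_perm; rewrite /= ?primes_uniq ?andbT ?mem_primes ?p_pr ?d_gt0 //.
  by move=> x; rewrite primesM // primes_prime // !inE.
rewrite /moebius muln_gt0 p_gt0 d_gt0 (perm_all _ primes_pd) (perm_size primes_pd) /=.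
have logn_pd x : x \in primes d -> logn x (p * d) = logn x d.
  rewrite mem_primes => /and3P[x_pr _ xd].
  rewrite lognM // logn_prime //; case: eqP => // xp.
  by move: pNd; rewrite -xp xd.
have -> : logn p (p * d) = 1%N.
  by rewrite lognM // logn_prime // eqxx logn_coprime // prime_coprime.
rewrite (eq_in_all (a2 := fun x => logn x d == 1%N)) => [|x /logn_pd ->] //.
by rewrite eqxx /=; case: ifP; rewrite ?oppr0 // exprS mulN1r.
Qed.

Lemma moebiusM_prime_dvd p d : prime p -> (0 < d)%N -> (p %| d)%N ->
  moebius (p * d) = 0.
Proof.
move=> p_pr d_gt0 pd; have p_gt0 := prime_gt0 p_pr.
rewrite /moebius; case: ifP => // /andP[_ /allP all_sqfree].
have : p \in primes (p * d) by rewrite mem_primes p_pr muln_gt0 p_gt0 d_gt0 dvdn_mulr.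
move/all_sqfree; rewrite lognM // logn_prime // eqxx.
have : (0 < logn p d)%N by rewrite logn_gt0 mem_primes p_pr d_gt0.
by case: (logn p d).
Qed.

Lemma sum_moebius_divisors m : (0 < m)%N ->
  \sum_(d <- divisors m) moebius d = (m == 1%N)%:R.
Proof.
move=> m_gt0; have [m_gt1 | m_le1] := ltnP 1 m; last first.
  have -> : m = 1%N by apply: anti_leq; rewrite m_le1.
  by rewrite (_ : divisors 1 = [:: 1%N]) // big_seq1.
set p := pdiv m; have p_pr : prime p by apply: pdiv_prime.
have pm : (p %| m)%N by apply: pdiv_dvd.
have mp_gt0 : (0 < m %/ p)%N by rewrite divn_gt0 ?prime_gt0 // dvdn_leq.
have sum_pNdvd : \sum_(d <- divisors m | ~~ (p %| d)%N) moebius d =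
                 \sum_(d <- divisors (m %/ p) | ~~ (p %| d)%N) moebius d.
  rewrite -big_filter -[RHS]big_filter; apply: perm_big.
  apply: uniq_perm; rewrite ?filter_uniq ?divisors_uniq // => x.
  rewrite !mem_filter -!dvdn_divisors //; apply/andP/andP => -[pNx xm]; split => //.
    have xp : coprime x p by rewrite coprime_sym prime_coprime.
    by rewrite -(Gauss_dvdl _ xp) divnK.
  by apply: dvdn_trans xm _; apply: dvdn_div.
have sum_pdvd : \sum_(d <- divisors m | (p %| d)%N) moebius d =
                - \sum_(d <- divisors (m %/ p) | ~~ (p %| d)%N) moebius d.
  rewrite -big_filter (perm_big _ (perm_divisors_dvd m_gt0 pm)) big_map.
  rewrite (bigID (fun d => (p %| d)%N)) /= big_seq_cond big1 ?add0r => [|d].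
    rewrite -sumrN big_seq_cond [RHS]big_seq_cond; apply: eq_bigr => d /andP[dm pNd].
    by rewrite moebiusM_prime // (divisors_gt0 mp_gt0 dm).
  by case/andP=> dm pd; rewrite moebiusM_prime_dvd // (divisors_gt0 mp_gt0 dm).
by rewrite (bigID (fun d => (p %| d)%N)) /= sum_pdvd sum_pNdvd addNr gtn_eqF.
Qed.

Lemma sum_moebius_multiples c k : (0 < k)%N -> (c %| k)%N ->
  \sum_(d <- divisors k | (c %| d)%N) moebius (k %/ d) = (c == k)%:R.
Proof.
move=> k_gt0 ck; have c_gt0 := dvdn_gt0 k_gt0 ck.
have kc_gt0 : (0 < k %/ c)%N by rewrite divn_gt0 // dvdn_leq.
rewrite -big_filter (perm_big _ (perm_divisors_dvd k_gt0 ck)) big_map.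
under eq_bigr do rewrite divnMA.
rewrite -(big_map (fun d => (k %/ c %/ d)%N) xpredT moebius).
rewrite -(perm_big _ (perm_divisors_compl kc_gt0)) sum_moebius_divisors //.
suff -> : (k %/ c == 1)%N = (c == k) by [].
apply/eqP/eqP => [kc1 | <-]; last by rewrite divnn c_gt0.
by rewrite -(divnK ck) kc1 mul1n.
Qed.

Lemma moebius_inversion (f F : nat -> int) k : (0 < k)%N ->
  (forall d, (0 < d)%N -> F d = \sum_(c <- divisors d) f c) ->
  f k = \sum_(d <- divisors k) moebius (k %/ d) * F d.
Proof.
move=> k_gt0 F_sum.
have -> : \sum_(d <- divisors k) moebius (k %/ d) * F d =
    \sum_(d <- divisors k) \sum_(c <- divisors k | (c %| d)%N) moebius (k %/ d) * f c.
  apply: eq_big_seq => d dk; rewrite -dvdn_divisors // in dk.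
  rewrite F_sum ?(dvdn_gt0 k_gt0 dk) // mulr_sumr -[RHS]big_filter.
  exact: perm_big (perm_divisors_sub k_gt0 dk).
rewrite (exchange_big_dep xpredT) //= (bigD1_seq k) ?divisors_id ?divisors_uniq //=.
rewrite -mulr_suml sum_moebius_multiples ?dvdnn // eqxx mul1r big1_seq ?addr0 //.
move=> c /andP[cNk]; rewrite -dvdn_divisors // => ck.
by rewrite -mulr_suml sum_moebius_multiples // (negPf cNk) mul0r.
Qed.

End Moebius.

Section Counting.

Lemma card_set_sum (T : finType) (P : pred T) :
  #|[set x | P x]| = \sum_(x : T) (P x : nat).
Proof. by rewrite -sum1dep_card big_mkcond; apply: eq_bigr => x _; case: (P x). Qed.

Lemma sum_dvdn_nat m g : 0 < m -> \sum_(0 <= i < m * g) (m %| i : nat) = g.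
Proof.
move=> m_gt0; elim: g => [|g IHg]; first by rewrite muln0 big_geq.
rewrite mulnSr (@big_cat_nat _ _ _ (m * g)) ?leq_addr //= IHg.
rewrite -{1}[m * g]add0n big_addn addKn.
under eq_bigr do rewrite dvdn_addl ?dvdn_mulr //.
rewrite big_ltn // dvdn0 big_nat big1 ?addn0 ?addn1 // => i /andP[i_gt0 i_lt_m].
by rewrite gtnNdvd.
Qed.

Lemma card_dvdn_mul_ord n D : 0 < n -> #|[set i : 'I_n | n %| i * D]| = gcdn D n.
Proof.
move=> n_gt0; set g := gcdn D n; have g_gt0 : 0 < g by rewrite gcdn_gt0 n_gt0 orbT.
set m := n %/ g; have def_n : n = m * g by rewrite divnK // dvdn_gcdr.
set D' := D %/ g; have def_D : D = D' * g by rewrite divnK // dvdn_gcdl.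
have m_gt0 : 0 < m by move: n_gt0; rewrite def_n muln_gt0 => /andP[].
have coprime_mD' : coprime m D'.
  by rewrite /coprime -(eqn_pmul2r g_gt0) mul1n muln_gcdl -def_D -def_n gcdnC.
rewrite card_set_sum -(big_mkord xpredT (fun i => n %| i * D : nat)).
rewrite (eq_bigr (fun i => m %| i : nat)) => [|i _]; first by rewrite def_n sum_dvdn_nat.
by rewrite def_D {1}def_n mulnA dvdn_pmul2r // Gauss_dvdl.
Qed.

Local Open Scope ring_scope.

Lemma card_unity_roots_finField (F : finFieldType) N :
  #|[set x : F | (x != 0) && (x ^+ N == 1)]| = gcdn N #|F|.-1.
Proof.
set n := #|F|.-1; have F_gt1 := finNzRing_gt1 F.
have card_F : #|F| = n.+1 by rewrite prednK // ltnW.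
have n_gt0 : (0 < n)%N by rewrite -ltnS -card_F.
have unit_expn (x : F) : x != 0 -> x ^+ n = 1.
  by move=> x_neq0; apply: (mulfI x_neq0); rewrite -exprS -card_F expf_card mulr1.
have /hasP[g _ g_prim] : has n.-primitive_root (enum (predC1 (0 : F))).
  apply: has_prim_root; rewrite ?enum_uniq -?cardE ?cardC1 //.
  by apply/allP => x; rewrite mem_enum unity_rootE => /unit_expn ->.
have g_neq0 : g != 0.
  apply/eqP => g0; have := prim_expr_order g_prim.
  by rewrite g0 expr0n gtn_eqF // => /esym/eqP; rewrite oner_eq0.
have -> : [set x : F | (x != 0) && (x ^+ N == 1)] =
          [set g ^+ i | i : 'I_n in [set i : 'I_n | (n %| i * N)%N]].
  apply/setP => x; rewrite inE; apply/andP/imsetP => [[x_neq0 /eqP xN1] | [i]].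
    have [i def_x] := prim_rootP g_prim (unit_expn x x_neq0).
    by exists i; rewrite // inE (prim_order_dvd g_prim) exprM -def_x xN1.
  rewrite inE => ni_dvd ->; split; first exact: expf_neq0.
  by rewrite -exprM -(prim_order_dvd g_prim).
rewrite card_imset ?card_dvdn_mul_ord // => i j /eqP.
by rewrite (eq_prim_root_expr g_prim) !modn_small // => /eqP/val_inj.
Qed.

Lemma card_fixed_exp_finField (F : finFieldType) N : (0 < N)%N ->
  #|[set x : F | x ^+ N == x]| = (gcdn N.-1 #|F|.-1).+1.
Proof.
move=> N_gt0; rewrite -card_unity_roots_finField -add1n.
have -> : [set x : F | x ^+ N == x] = 0 |: [set x : F | (x != 0) && (x ^+ N.-1 == 1)].
  apply/setP => x; rewrite !inE; have [-> | x_neq0] /= := eqVneq x 0.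
    by rewrite expr0n gtn_eqF // eqxx.
  by rewrite -[RHS](inj_eq (mulfI x_neq0)) mulr1 -exprS prednK.
by rewrite cardsU1 inE eqxx.
Qed.

Lemma card_fixed_exp_mod_prime p N : prime p -> (0 < N)%N ->
  #|[set a : 'I_p | (a ^ N == a %[mod p])%N]| = (gcdn (N - 1) (p - 1) + 1)%N.
Proof.
move=> p_pr N_gt0; pose toFp (a : 'I_p) : 'F_p := a%:R.
have eq_Fp (a b : nat) : (a%:R == b%:R :> 'F_p) = (a == b %[mod p])%N.
  by rewrite -val_eqE /= !val_Fp_nat.
have toFp_inj : injective toFp.
  by move=> a b /eqP; rewrite eq_Fp !modn_small // => /eqP/val_inj.
have toFp_bij : bijective toFp.
  by apply: inj_card_bij toFp_inj _; rewrite card_Fp // card_ord.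
have -> : [set a : 'I_p | (a ^ N == a %[mod p])%N] = toFp @^-1: [set x | x ^+ N == x].
  by apply/setP => a; rewrite !inE /toFp -natrX eq_Fp.
rewrite on_card_preimset ?card_fixed_exp_finField ?card_Fp //; last exact: onW_bij.
by rewrite !subn1 addn1.
Qed.

Local Close Scope ring_scope.

Lemma card_chinese p q (P Q : pred nat) : coprime p q -> 0 < p -> 0 < q ->
  #|[set m : 'I_(p * q) | P (m %% p) && Q (m %% q)]| =
  #|[set a : 'I_p | P a]| * #|[set b : 'I_q | Q b]|.
Proof.
move=> co_pq p_gt0 q_gt0.
pose residues (m : 'I_(p * q)) := (Ordinal (ltn_pmod m p_gt0), Ordinal (ltn_pmod m q_gt0)).
have residues_inj : injective residues.
  move=> a b [] /eqP ab_p /eqP ab_q; apply: val_inj.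
  have : a == b %[mod p * q] by rewrite chinese_remainder // ab_p ab_q.
  by rewrite !modn_small // => /eqP.
have residues_bij : bijective residues.
  by apply: inj_card_bij residues_inj _; rewrite card_prod !card_ord.
rewrite -cardsX -(on_card_preimset (onW_bij _ residues_bij)).
by apply: eq_card => m; rewrite !inE.
Qed.

Lemma card_fixed_exp_mod_pq p q N : prime p -> prime q -> p != q -> 0 < N ->
  #|[set m : 'I_(p * q) | m ^ N == m %[mod p * q]]| =
  (gcdn (N - 1) (p - 1) + 1) * (gcdn (N - 1) (q - 1) + 1).
Proof.
move=> p_pr q_pr pNq N_gt0.
have co_pq : coprime p q by rewrite prime_coprime // dvdn_prime2.
rewrite -!card_fixed_exp_mod_prime // -(card_chinese (fun a => a ^ N == a %[mod p])
  (fun b => b ^ N == b %[mod q])) ?prime_gt0 //.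
by apply: eq_card => m; rewrite !inE chinese_remainder // !modnXm !modn_mod.
Qed.

End Counting.

Section FixedPointsOfOrder.

Variables n e : nat.

Definition iter_fixed (j m : nat) : bool := m ^ (e ^ j) == m %[mod n].

Lemma iter_fixed0 m : iter_fixed 0 m.
Proof. by rewrite /iter_fixed expn0 expn1. Qed.

Lemma iter_fixedD a b m : iter_fixed a m -> iter_fixed (a + b) m = iter_fixed b m.
Proof.
by rewrite /iter_fixed expnD expnM => /eqP fix_a; rewrite -modnXm fix_a modnXm.
Qed.

Lemma iter_fixedMD a c r m : iter_fixed a m -> iter_fixed (a * c + r) m = iter_fixed r m.
Proof.
move=> fix_a; elim: c => [|c IHc]; first by rewrite muln0.
by rewrite mulnS -addnA iter_fixedD // IHc.
Qed.

Lemma iter_fixed_order d k m :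
  fixed_of_order n e d m -> iter_fixed k m = (d %| k).
Proof.
case/and3P=> d_gt0 fix_d /forallP minimal_d.
have -> : iter_fixed k m = iter_fixed (k %% d) m.
  by rewrite {1}(divn_eq k d) mulnC iter_fixedMD.
rewrite /dvdn; have [-> | r_gt0] := posnP (k %% d); first exact: iter_fixed0.
apply/negbTE; exact: implyP (minimal_d (Ordinal (ltn_pmod k d_gt0))) r_gt0.
Qed.

Lemma fixed_of_order_inj d d' m :
  fixed_of_order n e d m -> fixed_of_order n e d' m -> d = d'.
Proof.
move=> ord_d ord_d'; have /and3P[_ fix_d _] := ord_d; have /and3P[_ fix_d' _] := ord_d'.
apply/eqP; rewrite eqn_dvd -(iter_fixed_order _ ord_d) -(iter_fixed_order _ ord_d').
exact/andP.
Qed.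

Lemma fixed_of_order_exists k m :
  0 < k -> iter_fixed k m -> exists d, fixed_of_order n e d m.
Proof.
move=> k_gt0 fix_k.
have [|d /andP[d_gt0 fix_d] minimal_d] := ex_minnP (P := fun j => (0 < j) && iter_fixed j m).
  by exists k; rewrite k_gt0.
exists d; rewrite /fixed_of_order d_gt0 -/(iter_fixed d m) fix_d.
apply/forallP => j; apply/implyP => j_gt0.
by apply: contraTN (ltn_ord j) => fix_j; rewrite -leqNgt minimal_d ?j_gt0.
Qed.

Lemma sum_fixed_of_order k m : 0 < k ->
  \sum_(d <- divisors k) (fixed_of_order n e d m : nat) = iter_fixed k m.
Proof.
move=> k_gt0; have [fix_k | nfix_k] := boolP (iter_fixed k m); last first.
  rewrite big1_seq // => d /andP[_ dk]; apply/eqP; rewrite eqb0.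
  apply: contra nfix_k => ord_d.
  by rewrite (iter_fixed_order _ ord_d) dvdn_divisors.
have [d ord_d] := fixed_of_order_exists k_gt0 fix_k.
rewrite (bigD1_seq d) ?divisors_uniq -?dvdn_divisors -?(iter_fixed_order _ ord_d) //=.
rewrite ord_d big1 // => d' d'Nd; apply/eqP; rewrite eqb0.
apply: contra d'Nd => ord_d'.
by rewrite (fixed_of_order_inj ord_d' ord_d).
Qed.

Lemma card_iter_fixed k : 0 < k ->
  #|[set m : 'I_n | iter_fixed k m]| = \sum_(d <- divisors k) #|E_set n e d|.
Proof.
move=> k_gt0; under [RHS]eq_bigr do rewrite card_set_sum.
by rewrite exchange_big card_set_sum; apply: eq_bigr => m _; rewrite sum_fixed_of_order.
Qed.

End FixedPointsOfOrder.

Local Open Scope ring_scope.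

Theorem theorem2 (p q e k : nat) :
  prime p -> prime q -> p != q -> (0 < e)%N -> coprime e (totient (p * q)) ->
  (0 < k)%N ->
  (#|E_set (p * q) e k|%:Z =
   \sum_(d <- divisors k)
     moebius (k %/ d) *
     ((gcdn (e ^ d - 1) (p - 1) + 1) * (gcdn (e ^ d - 1) (q - 1) + 1))%N%:Z).
Proof.
move=> p_pr q_pr pNq e_gt0 _ k_gt0.
pose F d := #|[set m : 'I_(p * q) | iter_fixed (p * q) e d m]|%:Z.
rewrite (@moebius_inversion (fun d => #|E_set (p * q) e d|%:Z) F k) // => [|d d_gt0].
  by apply: eq_bigr => d _; rewrite /F card_fixed_exp_mod_pq // expn_gt0 e_gt0.
by rewrite /F card_iter_fixed // (big_morph Posz PoszD (erefl _)).
Qed.
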